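(* Let $K$ be a field and $f\in K(z)$ a rational function of degree $d\ge2$. For every $1\le n\le\infty$, $$G_\infty(K,f,t)=G_n^K,$$ where $G_n^K:=\{g\in G_\infty(K,f,t): (g|_v)(g|_w)^{-1}\in G_\infty(L_n,f,t)\text{ for all vertices }v,w\in T\}$.
   Context: Let $t$ be transcendental over $K$; $T:=\bigsqcup_{m\ge0}f^{-m}(t)$ is the $d$-adic tree of iterated preimages (each $x\in f^{-(m+1)}(t)$ joined to $f(x)$). For a field $L$ with $K\subseteq L\subseteq K^{\mathrm{sep}}$, $G_\infty(L,f,t)\le\mathrm{Aut}~T$ is the image of the natural action of $\mathrm{Gal}(L(t)^{\mathrm{sep}}/L(t))$ on $T$. $K_n(f,t)$ is the splitting field over $K(t)$ of $\{f^k\}_{k\le n}$ ($K_\infty(f,t)$ that of all iterates), and $L_n:=K^{\mathrm{sep}}\cap K_n(f,t)$, so that $G_\infty(L_n,f,t)\trianglelefteq G_\infty(K,f,t)$. Sections $g|_v\in\mathrm{Aut}~T$ are taken with respect to the self-similar structure on $G_\infty(K,f,t)$ induced by a choice of paths, i.e. $K^{\mathrm{sep}}$-isomorphisms $\lambda_v:K(t_v)^{\mathrm{sep}}\to K(t)^{\mathrm{sep}}$ with $t_v\mapsto t$ for each vertex (preimage) $t_v$, which identify the subtree below $t_v$ with $T$; with this identification $g|_v=\lambda_v^{-1}g_v\lambda_{v^g}$, where $g_v$ is the restriction of $g$ to $K_\infty(f,t_v)$. *)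

From HB Require Import structures.
From mathcomp Require Import all_boot all_order all_algebra all_field.
Set Implicit Arguments. Unset Strict Implicit. Unset Printing Implicit Defensive.
Import GRing.Theory.
Local Open Scope ring_scope.

Section Defs.
Variable F : fieldType.   (* F plays the role of the big field Omega = K(t)^sep *)

Definition is_subfield (S : F -> Prop) : Prop :=
  [/\ S 0, S 1,
      (forall x y, S x -> S y -> S (x - y)),
      (forall x y, S x -> S y -> S (x * y)) &
      (forall x, S x -> S x^-1)].

Definition gen (A : F -> Prop) (x : F) : Prop :=
  forall S, is_subfield S -> (forall y, A y -> S y) -> S x.

Definition coefs_in (S : F -> Prop) (p : {poly F}) : Prop := forall i, S p`_i.

Definition sep_alg_over (S : F -> Prop) (x : F) : Prop :=
  exists p : {poly F}, [/\ p != 0, coefs_in S p, separable_poly p & root p x].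

Definition transcendental_over (S : F -> Prop) (x : F) : Prop :=
  forall p : {poly F}, p != 0 -> coefs_in S p -> ~~ root p x.

Definition sep_closed : Prop :=
  forall p : {poly F}, (1 < size p)%N -> separable_poly p -> exists x, root p x.

Definition is_sep_closure_of (S : F -> Prop) : Prop :=
  sep_closed /\ forall x, sep_alg_over S x.

Definition is_aut (s : F -> F) : Prop :=
  [/\ (forall x y, s (x + y) = s x + s y),
      (forall x y, s (x * y) = s x * s y),
      s 1 = 1 & bijective s].

Definition adjoin (K : F -> Prop) (t : F) : F -> Prop :=
  gen (fun y => K y \/ y = t).

(* The rational function f = P/Q.  vert P Q t m x : x is in f^{-m}(t). *)
Fixpoint vert (P Q : {poly F}) (t : F) (m : nat) (x : F) : Prop :=
  match m with
  | 0 => x = t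
  | m'.+1 => Q.[x] != 0 /\ vert P Q t m' (P.[x] / Q.[x])
  end.

(* Vertices of T are pairs (level, element). *)
Definition is_vertex (P Q : {poly F}) (t : F) (v : nat * F) : Prop :=
  vert P Q t v.1 v.2.

(* levels up to n, with n = None meaning infinity *)
Definition lev_le (m : nat) (n : option nat) : Prop :=
  match n with Some n => (m <= n)%N | None => True end.

Definition Kn (K : F -> Prop) (P Q : {poly F}) (t : F) (n : option nat) : F -> Prop :=
  gen (fun y => K y \/ y = t \/ exists m, lev_le m n /\ vert P Q t m y).

Definition Ksep (K : F -> Prop) : F -> Prop := sep_alg_over K.

Definition Ln (K : F -> Prop) (P Q : {poly F}) (t : F) (n : option nat) : F -> Prop :=
  fun x => Ksep K x /\ Kn K P Q t n x.

(* G_oo(L,f,t): maps on vertices induced by some automorphism of F = L(t)^sep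
   fixing L(t) pointwise.  Membership is tested on the vertices of T. *)
Definition Ginf (L : F -> Prop) (P Q : {poly F}) (t : F)
  (g : nat * F -> nat * F) : Prop :=
  exists s : F -> F,
    [/\ is_aut s, (forall a, adjoin L t a -> s a = a) &
        forall v, is_vertex P Q t v -> g v = (v.1, s v.2)].

(* A choice of paths: for each vertex v = t_v, a K^sep-automorphism lam v of
   F = K(t_v)^sep = K(t)^sep with lam v t_v = t, and lami v its inverse. *)
Definition paths (K : F -> Prop) (P Q : {poly F}) (t : F)
  (lam lami : nat * F -> F -> F) : Prop :=
  forall v, is_vertex P Q t v ->
    [/\ is_aut (lam v), cancel (lam v) (lami v), cancel (lami v) (lam v),
        (forall a, Ksep K a -> lam v a = a) & lam v v.2 = t].

(* section g|_v = lam_v^{-1} g_v lam_{v^g} (right actions), evaluated at a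
   vertex u of T *)
Definition section (lam lami : nat * F -> F -> F) (g : nat * F -> nat * F)
  (v u : nat * F) : nat * F :=
  let z := lami v u.2 in
  (u.1, lam (g v) (g (v.1 + u.1, z)%N).2).

Definition GnK (K : F -> Prop) (P Q : {poly F}) (t : F)
  (lam lami : nat * F -> F -> F) (n : option nat) (g : nat * F -> nat * F) : Prop :=
  Ginf K P Q t g /\
  forall v w, is_vertex P Q t v -> is_vertex P Q t w ->
    (* (g|_v)(g|_w)^{-1} ∈ G_oo(L_n,f,t), i.e. g|_v = h (g|_w) for some h *)
    exists h, Ginf (Ln K P Q t n) P Q t h /\
      forall u, is_vertex P Q t u -> section lam lami g v u = section lam lami g w (h u).

Definition lev_pos (n : option nat) : Prop :=
  match n with Some n => (1 <= n)%N | None => True end.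

End Defs.

From HB Require Import structures.
From mathcomp Require Import all_boot all_order all_algebra all_field.
Set Implicit Arguments. Unset Strict Implicit. Unset Printing Implicit Defensive.
Import GRing.Theory.
Local Open Scope ring_scope.

(* Let g be induced by an automorphism s fixing K(t).  Every section g|_v is
   induced by lam_{v^g} o s o lam_v^{-1}, and since each lam fixes K^sep, all
   sections of g act on K^sep exactly as s does.  Hence (g|_v)(g|_w)^{-1} is
   induced by an automorphism fixing K^sep and t, i.e. it lies in
   G_oo(K^sep, f, t), which is contained in G_oo(L_n, f, t) as L_n <= K^sep.
   The reverse inclusion G_n^K <= G_oo(K, f, t) holds by definition. *)

Section Automorphisms.
Variable F : fieldType.
Implicit Types (s : F -> F) (A : F -> Prop).

Lemma aut0 s : is_aut s -> s 0 = 0.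
Proof.
case=> sD _ _ _; apply: (@addrI _ (s 0)).
by rewrite -sD !addr0.
Qed.

Lemma autB s x y : is_aut s -> s (x - y) = s x - s y.
Proof. by case=> sD _ _ _; apply/eqP; rewrite eq_sym subr_eq -sD subrK. Qed.

Lemma aut_inj s : is_aut s -> injective s.
Proof. by case=> _ _ _ /bij_inj. Qed.

Lemma autV s x : is_aut s -> s x^-1 = (s x)^-1.
Proof.
move=> hs; have [_ sM s1 _] := hs.
have [->|x_neq0] := eqVneq x 0; first by rewrite invr0 aut0 // invr0.
have sx_neq0 : s x != 0 by rewrite -(aut0 hs) (inj_eq (aut_inj hs)).
by apply: (mulfI sx_neq0); rewrite -sM !mulfV.
Qed.

Lemma autX s x i : is_aut s -> s (x ^+ i) = s x ^+ i.
Proof. by case=> _ sM s1 _; elim: i => [|i IH]; rewrite ?expr0 // !exprS sM IH. Qed.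

Lemma aut_horner s (p : {poly F}) x :
  is_aut s -> (forall i, s p`_i = p`_i) -> s p.[x] = p.[s x].
Proof.
move=> hs hp; have [sD sM _ _] := hs.
rewrite !horner_coef (big_morph s sD (aut0 hs)).
by apply: eq_bigr => i _; rewrite sM hp autX.
Qed.

Lemma aut_comp s1 s2 : is_aut s1 -> is_aut s2 -> is_aut (s1 \o s2).
Proof.
case=> aD aM a1 ab; case=> bD bM b1 bb; split=> /=.
- by move=> x y; rewrite bD aD.
- by move=> x y; rewrite bM aM.
- by rewrite b1 a1.
- exact: bij_comp.
Qed.

Lemma aut_can s si : is_aut s -> cancel si s -> is_aut si.
Proof.
move=> hs siK; have [sD sM s1 _] := hs.
have sK : cancel s si by move=> x; apply: (aut_inj hs); rewrite siK.
split; last by exists s.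
- by move=> x y; apply: (aut_inj hs); rewrite sD !siK.
- by move=> x y; apply: (aut_inj hs); rewrite sM !siK.
- by apply: (aut_inj hs); rewrite siK.
Qed.

Lemma is_subfield_fixed s : is_aut s -> is_subfield (fun x => s x = x).
Proof.
move=> hs; have [_ sM s1 _] := hs; split=> //.
- exact: aut0.
- by move=> x y hx hy; rewrite autB // hx hy.
- by move=> x y hx hy; rewrite sM hx hy.
- by move=> x hx; rewrite autV // hx.
Qed.

Lemma gen_fixed s A x :
  is_aut s -> (forall y, A y -> s y = y) -> gen A x -> s x = x.
Proof. by move=> hs hA /(_ _ (is_subfield_fixed hs)); apply. Qed.

Lemma aut_quotient (a b : F -> F) : is_aut a -> is_aut b ->
  exists tau, [/\ is_aut tau, forall x, a x = b (tau x)
                  & forall x, a x = b x -> tau x = x].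
Proof.
move=> ha hb; have [_ _ _ [bi biK bK]] := hb.
exists (bi \o a); split=> [|x|x /= ->] //=.
exact: aut_comp (aut_can hb bK) ha.
Qed.

End Automorphisms.

Section Trees.
Variables (F : fieldType) (P Q : {poly F}).

Lemma vert_aut s a m x : is_aut s ->
  (forall i, s P`_i = P`_i) -> (forall i, s Q`_i = Q`_i) ->
  vert P Q a m x -> vert P Q (s a) m (s x).
Proof.
move=> hs hP hQ; have [_ sM _ _] := hs.
elim: m x => [|m IH] x /=; first by move=> ->.
case=> Qx_neq0 /IH; rewrite sM autV // (aut_horner _ hs hP) (aut_horner _ hs hQ) => hv.
by split=> //; rewrite -aut_horner // -(aut0 hs) (inj_eq (aut_inj hs)).
Qed.

Lemma vert_cat a b m k x :
  vert P Q a m x -> vert P Q b k a -> vert P Q b (k + m) x.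
Proof.
elim: m x => [|m IH] x /=; first by move=> -> ; rewrite addn0.
by case=> Qx_neq0 hv hb; rewrite addnS; split=> //; apply: IH.
Qed.

Lemma vertex_aut (K : F -> Prop) t s v :
  coefs_in K P -> coefs_in K Q -> is_aut s ->
  (forall a, K a -> s a = a) -> s t = t ->
  is_vertex P Q t v -> is_vertex P Q t (v.1, s v.2).
Proof.
move=> PK QK hs sK st hv; rewrite /is_vertex /= -st.
by apply: vert_aut => // i; apply: sK.
Qed.

End Trees.

Section SeparableClosure.
Variables (F : fieldType) (K : F -> Prop).
Hypothesis K_subfield : is_subfield K.

Lemma Ksep_mem a : K a -> Ksep K a.
Proof.
have [K0 K1 KB _ _] := K_subfield; move=> Ka.
exists ('X - a%:P); split.
- by rewrite monic_neq0 // monicXsubC.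
- move=> [|[|i]]; rewrite coefB coefX coefC /= ?subr0 ?sub0r //.
  by rewrite -sub0r; apply: KB.
- by have := separable_prod_XsubC [:: a]; rewrite big_seq1 /= => ->.
- by rewrite root_XsubC.
Qed.

Lemma Ksep_aut s a :
  is_aut s -> (forall b, K b -> s b = b) -> Ksep K a -> Ksep K (s a).
Proof.
move=> hs sK [p [p_neq0 pK p_sep p_root]]; exists p; split=> //.
by rewrite /root -aut_horner // ?(eqP p_root) ?aut0 // => i; apply: sK.
Qed.

End SeparableClosure.

Section SectionsOfAutomorphism.
Variables (F : fieldType) (K : F -> Prop) (t : F) (P Q : {poly F}).
Variables (lam lami : nat * F -> F -> F) (s : F -> F) (g : nat * F -> nat * F).
Hypotheses (K_subfield : is_subfield K) (PK : coefs_in K P) (QK : coefs_in K Q).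
Hypothesis lam_paths : paths K P Q t lam lami.
Hypotheses (s_aut : is_aut s) (s_fixed : forall a, adjoin K t a -> s a = a).
Hypothesis g_of_s : forall v, is_vertex P Q t v -> g v = (v.1, s v.2).

Notation vertex := (is_vertex P Q t).

Definition section_map v x := lam (g v) (s (lami v x)).

Let s_fixK a : K a -> s a = a.
Proof. by move=> Ka; apply: s_fixed => S _; apply; left. Qed.

Let s_t : s t = t.
Proof. by apply: s_fixed => S _; apply; right. Qed.

Lemma lami_aut v : vertex v -> is_aut (lami v).
Proof. by case/lam_paths=> hl _ lamiK _ _; apply: aut_can hl lamiK. Qed.

Lemma lami_Ksep v a : vertex v -> Ksep K a -> lami v a = a.
Proof. by case/lam_paths=> _ lamK _ hfix _ Ka; rewrite -{1}(hfix a Ka) lamK. Qed.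

Lemma lami_t v : vertex v -> lami v t = v.2.
Proof. by case/lam_paths=> _ lamK _ _ <-; rewrite lamK. Qed.

Lemma vertex_g v : vertex v -> vertex (g v).
Proof. by move=> hv; rewrite g_of_s //; apply: vertex_aut s_fixK s_t hv. Qed.

Lemma vertex_lami v u : vertex v -> vertex u -> vertex (v.1 + u.1, lami v u.2)%N.
Proof.
move=> hv hu; apply: (@vert_cat _ P Q v.2) => //.
have lamiK i : K i -> lami v i = i by move=> Ki; apply: lami_Ksep (Ksep_mem _ _).
by rewrite -(lami_t hv); apply: vert_aut (lami_aut hv) _ _ hu => i; apply: lamiK.
Qed.

Lemma sectionE v u :
  vertex v -> vertex u -> section lam lami g v u = (u.1, section_map v u.2).
Proof. by move=> hv hu; rewrite /section (g_of_s (vertex_lami hv hu)). Qed.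

Lemma section_map_aut v : vertex v -> is_aut (section_map v).
Proof.
move=> hv; have [lam_aut _ _ _ _] := lam_paths (vertex_g hv).
exact: aut_comp lam_aut (aut_comp s_aut (lami_aut hv)).
Qed.

Lemma section_map_Ksep v a : vertex v -> Ksep K a -> section_map v a = s a.
Proof.
move=> hv Ka; have [_ _ _ lam_fix _] := lam_paths (vertex_g hv).
by rewrite /section_map lami_Ksep // lam_fix //; apply: Ksep_aut.
Qed.

Lemma section_map_t v : vertex v -> section_map v t = t.
Proof.
move=> hv; have [_ _ _ _ lam_t] := lam_paths (vertex_g hv).
by rewrite /section_map lami_t // -[s v.2]/((v.1, s v.2).2) -g_of_s.
Qed.

Lemma section_quotient_Ginf n v w : vertex v -> vertex w ->
  exists h, Ginf (Ln K P Q t n) P Q t h /\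
    forall u, vertex u -> section lam lami g v u = section lam lami g w (h u).
Proof.
move=> hv hw.
have [tau [tau_aut sv_tau tau_fix]] :=
  aut_quotient (section_map_aut hv) (section_map_aut hw).
have tau_Ksep a : Ksep K a -> tau a = a.
  by move=> Ka; apply: tau_fix; rewrite !section_map_Ksep.
have tau_t : tau t = t by apply: tau_fix; rewrite !section_map_t.
exists (fun u => (u.1, tau u.2)); split.
  exists tau; split=> // a; apply: gen_fixed tau_aut _ => y [[Ky _]|->] //.
  exact: tau_Ksep.
move=> u hu; have tau_K a : K a -> tau a = a by move=> Ka; apply/tau_Ksep/Ksep_mem.
by rewrite !sectionE ?sv_tau //; apply: vertex_aut tau_K tau_t hu.
Qed.

End SectionsOfAutomorphism.

Theorem proposition3p2 (F : fieldType) (K : F -> Prop) (t : F) (P Q : {poly F})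
  (lam lami : nat * F -> F -> F) (n : option nat) :
  is_subfield K ->
  transcendental_over K t ->
  is_sep_closure_of (adjoin K t) ->
  coefs_in K P -> coefs_in K Q -> Q != 0 -> coprimep P Q ->
  (2 <= (maxn (size P) (size Q)).-1)%N ->
  paths K P Q t lam lami ->
  lev_pos n ->
  forall g : nat * F -> nat * F,
    Ginf K P Q t g <-> GnK K P Q t lam lami n g.
Proof.
move=> K_subfield _ _ PK QK _ _ _ lam_paths _ g; split; last by case.
move=> g_Ginf; split=> //; have [s [s_aut s_fixed g_of_s]] := g_Ginf.
exact: section_quotient_Ginf K_subfield PK QK lam_paths s_aut s_fixed g_of_s n.
Qed.
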